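(* Let $\mathcal G$ be a Hilbert space of arbitrary (finite or infinite) dimension, let $A,B$ be bounded everywhere defined linear operators in $\mathcal G$ such that the linear relation $\Lambda=\{(f,f')\in\mathcal G\oplus\mathcal G:\ Af=Bf'\}$ is closed, and let $R$ be a bounded operator in $\mathcal G$. Then $(\Lambda-R)^{-1}$ is (the graph of) a bounded everywhere defined operator in $\mathcal G$ if and only if $\ker(A-BR)=\{0\}$ and $\operatorname{Ran}B\subset\operatorname{Ran}(A-BR)$.
   Context: A linear relation in $\mathcal G$ is a linear subspace of $\mathcal G\oplus\mathcal G$. For a relation $\Lambda$ and an operator $R$, $\Lambda-R=\{(f,f'-Rf):\ (f,f')\in\Lambda\}$, and the inverse relation of a relation $\Theta$ is $\Theta^{-1}=\{(g,f):(f,g)\in\Theta\}$. *)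

From HB Require Import structures.
From mathcomp Require Import all_boot all_order all_algebra.
From mathcomp Require Import complex.
From mathcomp Require Import all_classical all_reals all_analysis.
Set Implicit Arguments. Unset Strict Implicit. Unset Printing Implicit Defensive.
Import Order.TTheory GRing.Theory Num.Theory.
Import numFieldNormedType.Exports.
Local Open Scope ring_scope.
Local Open Scope classical_set_scope.
Local Open Scope complex_scope.

Section Defs.
Context {R : realType} {V : normedModType R[i]}.

(* ip is an inner product on V (linear in the first argument, conjugate
   symmetric) inducing the norm of V: <x,x> = |x|^2. Together with
   completeness of V this makes V a (complex) Hilbert space. *)
Definition is_inner_product (ip : V -> V -> R[i]) : Prop :=
  [/\ forall (a : R[i]) (x y z : V), ip (a *: x + y) z = a * ip x z + ip y z,
      forall x y : V, ip y x = (ip x y)^* &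
      forall x : V, ip x x = `|x| ^+ 2].

Definition bounded_op (T : V -> V) : Prop :=
  exists M : R[i], forall x : V, `|T x| <= M * `|x|.

Definition linrel_kernel_rel (A B : V -> V) : set (V * V) :=
  [set p | A p.1 = B p.2].

Definition rel_sub_op (L : set (V * V)) (Rop : V -> V) : set (V * V) :=
  [set p | exists f f', L (f, f') /\ p = (f, f' - Rop f)].

Definition rel_inv (L : set (V * V)) : set (V * V) :=
  [set p | L (p.2, p.1)].

Definition op_graph (T : V -> V) : set (V * V) :=
  [set p | p.2 = T p.1].

End Defs.

From HB Require Import structures.
From mathcomp Require Import all_boot all_order all_algebra.
From mathcomp Require Import complex.
From mathcomp Require Import all_classical all_reals all_analysis.
From mathcomp Require Import ring lra.
Import Order.TTheory GRing.Theory Num.Theory.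
Import numFieldNormedType.Exports.
Local Open Scope ring_scope.
Local Open Scope classical_set_scope.
Local Open Scope complex_scope.

(* Put C := A - B R.  A pair (g, f) lies in (Λ - R)^-1 exactly when C f = B g,
   so (Λ - R)^-1 is the graph of an everywhere defined operator T iff C is
   injective and Ran B ⊆ Ran C, and then T = C^-1 B.  Such a T is automatically
   bounded: its graph is closed because C and B are continuous, and the closed
   graph theorem applies.  The latter is proved by a Baire category argument
   for the sets {g | |T g| <= n}, followed by successive approximation. *)

Lemma complex_gt0_real {R : realType} {e : R[i]} :
  0 < e -> exists2 r : R, e = r%:C & 0 < r.
Proof. by case: e => a b; rewrite ltcE /= => /andP[/eqP -> a_gt0]; exists a. Qed.

Section RealNorm.
Context {R : realType} {V : normedModType R[i]}.

(* The norm of a normed R[i]-module is a nonnegative real number stored in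
   R[i]; rnorm brings it back to R, where lra and nra apply. *)
Definition rnorm (x : V) : R := complex.Re `|x|.

Lemma normE_rnorm (x : V) : `|x| = (rnorm x)%:C.
Proof.
have := normr_ge0 x; rewrite lecE => /andP[/eqP im0 _].
by rewrite /rnorm; case: `|x| im0 => a b /= ->.
Qed.

Lemma rnorm_ge0 (x : V) : 0 <= rnorm x.
Proof. by rewrite -ler0c -normE_rnorm. Qed.

Lemma rnorm0 : rnorm 0 = 0.
Proof. by rewrite /rnorm normr0. Qed.

Lemma rnorm_gt0 (x : V) : (0 < rnorm x) = (x != 0).
Proof. by rewrite -ltcR -normE_rnorm normr_gt0. Qed.

Lemma ler_rnormD (x y : V) : rnorm (x + y) <= rnorm x + rnorm y.
Proof. by rewrite -lecR raddfD /= -!normE_rnorm ler_normD. Qed.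

Lemma rnormN (x : V) : rnorm (- x) = rnorm x.
Proof. by rewrite /rnorm normrN. Qed.

Lemma rnorm_distC (x y : V) : rnorm (x - y) = rnorm (y - x).
Proof. by rewrite /rnorm distrC. Qed.

Lemma rnormZ (c : R) (x : V) : rnorm (c%:C *: x) = `|c| * rnorm x.
Proof. by rewrite /rnorm normrZ normE_rnorm normc_def /= expr0n addr0 sqrtr_sqr /= mulr0 subr0. Qed.

End RealNorm.

Section BoundedOp.
Context {R : realType} {V : normedModType R[i]}.

Lemma bounded_op_continuous [T : {linear V -> V}] : bounded_op T -> continuous T.
Proof.
move=> [M TM]; apply: bounded_linear_continuous.
rewrite /bounded_near; near=> N.
apply/nbhs_normP; exists 1 => //= x.
rewrite /ball_ /= sub0r normrN => x1.
have Mx_ge0 : 0 <= M * `|x| := le_trans (normr_ge0 _) (TM x).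
apply: (le_trans (TM x)); rewrite -(ger0_norm Mx_ge0) normrM normr_id.
apply: le_trans (ler_wpM2l (normr_ge0 M) (ltW x1)) _; rewrite mulr1.
by near: N; apply: nbhs_pinfty_ge; rewrite realE normr_ge0.
Unshelve. all: by end_near. Qed.

Lemma bounded_op_rnorm [T : V -> V] [K : R] :
  (forall x, rnorm (T x) <= K * rnorm x) -> bounded_op T.
Proof. by move=> TK; exists K%:C => x; rewrite !normE_rnorm -rmorphM lecR. Qed.

End BoundedOp.

Section HalfPowers.
Context {R : realType}.

Definition halfpow (n : nat) : R := 2^-1 ^+ n.

Lemma halfpow0 : halfpow 0 = 1.
Proof. by rewrite /halfpow expr0. Qed.

Lemma halfpowS n : halfpow n.+1 = 2^-1 * halfpow n.
Proof. by rewrite /halfpow exprS. Qed.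

Lemma halfpow_gt0 n : 0 < halfpow n.
Proof. by rewrite /halfpow exprn_gt0 // invr_gt0. Qed.

Lemma halfpow_le {m n} : (m <= n)%N -> halfpow n <= halfpow m.
Proof.
move=> /subnK <-; elim: (n - m)%N => [|k IH] //.
by rewrite addSn halfpowS; have := halfpow_gt0 (k + m); lra.
Qed.

Lemma halfpow_small (e : R) : 0 < e -> exists n, halfpow n < e.
Proof.
move=> e_gt0; exists (Num.truncn e^-1).
rewrite /halfpow exprVn -[ltRHS]invrK ltf_pV2 ?posrE ?invr_gt0 ?exprn_gt0 //.
apply: lt_le_trans (truncnS_gt _) _.
by rewrite -natrX ler_nat ltn_expl.
Qed.

End HalfPowers.

Section HalfPowerSequences.
Context {R : realType} {V : normedModType R[i]}.
Implicit Types (u : nat -> V) (c : R).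

Lemma rnorm_telescope_le {u c m n} :
  (forall k, rnorm (u k.+1 - u k) <= c * halfpow k) ->
  (m <= n)%N -> rnorm (u n - u m) <= 2 * c * (halfpow m - halfpow n).
Proof.
move=> du /subnK <-; elim: (n - m)%N => [|k IH].
  by rewrite add0n subrr rnorm0 subrr mulr0.
rewrite addSn halfpowS.
have -> : u (k + m).+1 - u m = (u (k + m).+1 - u (k + m)%N) + (u (k + m)%N - u m).
  by rewrite addrA subrK.
apply: le_trans (ler_rnormD _ _) _.
by have := du (k + m)%N; move: IH; lra.
Qed.

Lemma cvg_halfpow {u y c} :
  (forall n, rnorm (y - u n) <= c * halfpow n) -> u @ \oo --> y.
Proof.
move=> yu; apply/cvgrPdist_lt => e e_gt0.
have [e' e_eq e'_gt0] := complex_gt0_real e_gt0.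
have c_ge0 : 0 <= c.
  have := yu 0%N; rewrite halfpow0 mulr1; exact/le_trans/rnorm_ge0.
have [m hm] : exists m, halfpow m < e' / (1 + c).
  by apply: halfpow_small; rewrite divr_gt0 // ltr_pwDl.
near=> n; rewrite e_eq normE_rnorm ltcR.
apply: le_lt_trans (yu n) _.
have mn : (m <= n)%N by near: n; exists m.
have := halfpow_le (R:=R) mn; have := halfpow_gt0 (R:=R) n.
by move: hm; rewrite ltr_pdivlMr; nra.
Unshelve. all: by end_near. Qed.

Lemma cvg_rnorm_le {u l} a b k : u @ \oo --> l ->
  (forall n, (k <= n)%N -> rnorm (u n - a) <= b) -> rnorm (l - a) <= b.
Proof.
move=> ul ub; rewrite leNgt; apply/negP => ab.
have gap : 0 < (rnorm (l - a) - b)%:C by rewrite ltcR subr_gt0.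
move/cvgr_dist_lt: ul => /(_ _ gap)[M _ uM].
have := uM (maxn M k) (leq_maxl _ _); rewrite normE_rnorm ltcR.
have := ub _ (leq_maxr M k); have := ler_rnormD (l - u (maxn M k)) (u (maxn M k) - a).
by rewrite addrA subrK; lra.
Qed.

End HalfPowerSequences.

Lemma halfpow_cauchy_cvg {R : realType} {V : completeNormedModType R[i]}
    {u : nat -> V} {c : R} :
  (forall n, rnorm (u n.+1 - u n) <= c * halfpow n) -> cvgn u.
Proof.
move=> du; apply/cauchy_cvgP/cauchy_exP => _ /complex_gt0_real[e -> e_gt0].
have c_ge0 : 0 <= c by have := du 0%N; rewrite halfpow0 mulr1; exact/le_trans/rnorm_ge0.
have [m hm] : exists m, halfpow m < e / (1 + 2 * c).
  by apply: halfpow_small; rewrite divr_gt0 // ltr_pwDl // mulr_ge0.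
exists (u m), m => // n /= mn.
rewrite -ball_normE /ball_ /= normE_rnorm ltcR rnorm_distC.
apply: le_lt_trans (rnorm_telescope_le du mn) _.
have := halfpow_gt0 (R:=R) n; have := halfpow_gt0 (R:=R) m.
by move: hm; rewrite ltr_pdivlMr; nra.
Qed.

Section Baire.
Context {R : realType} {V : completeNormedModType R[i]}.

Definition dense_in_ball (E : set V) (x : V) (r : R) :=
  forall y, rnorm (y - x) < r -> forall eps, 0 < eps ->
    exists2 g, E g & rnorm (y - g) < eps.

Lemma escape_ball [E : set V] [x : V] [r : R] : 0 < r -> ~ dense_in_ball E x r ->
  exists y s, [/\ 0 < s, rnorm (y - x) + 2 * s <= r &
                  forall g, E g -> 2 * s <= rnorm (y - g)].
Proof.
move=> r_gt0 notdense.
have [y [yx [eps [eps_gt0 far]]]] : exists y, rnorm (y - x) < r /\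
    exists eps, 0 < eps /\ forall g, E g -> eps <= rnorm (y - g).
  apply: contrapT => nofar; apply: notdense => y yx eps eps_gt0.
  apply: contrapT => noclose; apply: nofar; exists y; split => //.
  exists eps; split => // g Eg; rewrite leNgt; apply/negP => close.
  by apply: noclose; exists g.
pose s := Num.min eps (r - rnorm (y - x)).
have s_le_eps : s <= eps by rewrite ge_min lexx.
have s_le_r : s <= r - rnorm (y - x) by rewrite ge_min lexx orbT.
have s_gt0 : 0 < s by rewrite lt_min eps_gt0 subr_gt0.
exists y, (s / 2); split; [exact: divr_gt0 | lra |].
by move=> g /far; lra.
Qed.

Lemma baire_dense_ball [E : nat -> set V] : (forall x, exists n, E n x) ->
  exists n x r, 0 < r /\ dense_in_ball (E n) x r.
Proof.
move=> Ecover; apply: contrapT => nodense.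
have escape (p : nat * V * R) : exists q : V * R, 0 < p.2 ->
    [/\ 0 < q.2, rnorm (q.1 - p.1.2) + 2 * q.2 <= p.2 &
        forall g, E p.1.1 g -> 2 * q.2 <= rnorm (q.1 - g)].
  case: p => [[n x] r] /=; have [r_gt0|] := boolP (0 < r); last by exists (0, 0).
  have notdense : ~ dense_in_ball (E n) x r by move=> d; apply: nodense; exists n, x, r.
  by have [y [s hys]] := escape_ball r_gt0 notdense; exists (y, s).
(* Nested balls, the (k+1)-st at positive distance from E k; their centres
   converge to a point that lies in no E k. *)
have [next nextP] := choice escape.
pose fix balls k : V * R :=
  if k is k'.+1 then next (k', (balls k').1, (balls k').2) else (0, 1).
pose x k := (balls k).1; pose r k := (balls k).2.
have r_gt0 k : 0 < r k.
  by elim: k => [|k IH]; [exact: ltr01 | have [] := nextP (k, x k, r k) IH].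
have ballsS k := nextP (k, x k, r k) (r_gt0 k).
have r_le k : r k <= halfpow k.
  elim: k => [|k IH]; first by rewrite halfpow0.
  have [_ + _] := ballsS k; have := rnorm_ge0 (x k.+1 - x k).
  by rewrite halfpowS; move: IH; lra.
have nested m n : (m <= n)%N -> rnorm (x n - x m) + r n <= r m.
  move=> /subnK <-; elim: (n - m)%N => [|j IH]; first by rewrite subrr rnorm0 add0r.
  have [_ + _] := ballsS (j + m)%N; rewrite addSn.
  have := ler_rnormD (x (j + m).+1 - x (j + m)%N) (x (j + m)%N - x m).
  by rewrite addrA subrK; move: IH; have := r_gt0 (j + m).+1; lra.
have xl : x @ \oo --> limn x.
  apply: (halfpow_cauchy_cvg (c := 1)) => k; rewrite mul1r.
  by have [_ + _] := ballsS k; have := r_le k; have := r_gt0 k.+1; lra.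
have [k Ekl] := Ecover (limn x).
have near_l : rnorm (limn x - x k.+1) <= r k.+1.
  apply: (cvg_rnorm_le _ _ k.+1 xl) => n /nested.
  by have := r_gt0 n; lra.
have [_ _ /(_ _ Ekl)] := ballsS k; rewrite rnorm_distC.
by have := r_gt0 k.+1; lra.
Qed.

End Baire.

Definition graph_seq_closed {U W : topologicalType} (T : U -> W) :=
  forall (u : nat -> U) y h, u @ \oo --> y -> T \o u @ \oo --> h -> h = T y.

Section ClosedGraph.
Context {R : realType} {U W : completeNormedModType R[i]}.
Implicit Types (T : {linear U -> W}) (K : R).

Definition almost_bounded T K :=
  forall y eps, 0 < eps -> exists2 g, rnorm (T g) <= K * rnorm y & rnorm (y - g) < eps.

Lemma dense_ball_almost_bounded [T n x0 r] : 0 < r ->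
  dense_in_ball [set g | rnorm (T g) <= n%:R] x0 r ->
  exists2 K, 0 <= K & almost_bounded T K.
Proof.
move=> r_gt0 dense; exists (4 * n%:R / r); first by rewrite divr_ge0 // ltW.
move=> y eps eps_gt0.
have [->|y_neq0] := eqVneq y 0; first by exists 0; rewrite ?(linear0, subrr, rnorm0, mulr0).
have y_gt0 : 0 < rnorm y by rewrite rnorm_gt0.
set a := rnorm y in y_gt0 *.
(* Rescale y to z of norm r / 2 and approximate both x0 + z and x0. *)
pose s := r / (2 * a).
have s_gt0 : 0 < s by rewrite divr_gt0 // mulr_gt0.
pose z := s%:C *: y.
have z_norm : rnorm z = r / 2.
  by rewrite /z rnormZ (ger0_norm (ltW s_gt0)) /s -/a; field; rewrite gt_eqF.
have e_gt0 : 0 < eps * s / 2 by rewrite divr_gt0 // mulr_gt0.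
have [g1 /= Tg1 g1_near] : exists2 g, rnorm (T g) <= n%:R & rnorm (x0 + z - g) < eps * s / 2.
  by apply: dense => //; rewrite addrAC subrr add0r z_norm; lra.
have [g2 /= Tg2 g2_near] : exists2 g, rnorm (T g) <= n%:R & rnorm (x0 - g) < eps * s / 2.
  by apply: dense => //; rewrite subrr rnorm0.
have sV_ge0 : 0 <= s^-1 by rewrite invr_ge0 ltW.
exists ((s^-1)%:C *: (g1 - g2)).
  rewrite linearZ /= rnormZ (ger0_norm sV_ge0) linearB /=.
  have := ler_rnormD (T g1) (- T g2); rewrite rnormN => Tg12.
  apply: le_trans (ler_wpM2l sV_ge0 (_ : _ <= 2 * n%:R)) _; first lra.
  by rewrite /s invf_div -/a le_eqVlt; apply/orP; left; apply/eqP; field; rewrite gt_eqF.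
have -> : y = (s^-1)%:C *: z by rewrite /z scalerA -rmorphM mulVf ?gt_eqF // scale1r.
rewrite -scalerBr.
have -> : z - (g1 - g2) = (x0 + z - g1) - (x0 - g2).
  by rewrite !opprB [RHS]addrC !addrA addrNK (addrC z).
rewrite rnormZ (ger0_norm sV_ge0) -ltr_pdivlMl ?invr_gt0 // invrK.
by have := ler_rnormD (x0 + z - g1) (- (x0 - g2)); rewrite rnormN; lra.
Qed.

Lemma almost_bounded_partial_sums [T K] y [a] : 0 <= K -> almost_bounded T K ->
  0 < a -> rnorm y <= a ->
  exists S : nat -> U, [/\ S 0%N = 0,
    forall n, rnorm (T (S n.+1) - T (S n)) <= K * a * halfpow n &
    forall n, rnorm (y - S n) <= a * halfpow n].
Proof.
move=> K_ge0 TK a_gt0 ya.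
have pick (p : U * nat) : exists g,
    rnorm (T g) <= K * rnorm p.1 /\ rnorm (p.1 - g) < a * halfpow p.2.+1.
  have [g Tg pg] := TK p.1 _ (mulr_gt0 a_gt0 (halfpow_gt0 p.2.+1)).
  by exists g.
have [next nextP] := choice pick.
pose fix S n := if n is n'.+1 then S n' + next (y - S n', n') else 0.
have stepS n := nextP (y - S n, n).
have yS n : rnorm (y - S n) <= a * halfpow n.
  case: n => [|n]; first by rewrite subr0 halfpow0 mulr1.
  by have [_ /ltW] := stepS n; rewrite /= opprD addrA.
exists S; split => // n; rewrite -linearB /= addrC addKr.
have [Tn _] := stepS n; apply: le_trans Tn _.
by rewrite /= -mulrA ler_wpM2l // yS.
Qed.

Theorem closed_graph_bounded [T] : graph_seq_closed T ->
  exists K, forall x, rnorm (T x) <= K * rnorm x.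
Proof.
move=> Tclosed.
have cover g : exists n, [set g | rnorm (T g) <= n%:R] g.
  by exists (Num.truncn (rnorm (T g))).+1; apply/ltW/truncnS_gt.
have [n [x0 [r [r_gt0 dense]]]] := baire_dense_ball cover.
have [K K_ge0 TK] := dense_ball_almost_bounded r_gt0 dense.
exists (2 * K) => y.
have [->|y_neq0] := eqVneq y 0; first by rewrite linear0 !rnorm0 mulr0.
have y_gt0 : 0 < rnorm y by rewrite rnorm_gt0.
have [S [S0 TS yS]] := almost_bounded_partial_sums y K_ge0 TK y_gt0 (lexx _).
have TSl : T \o S @ \oo --> limn (T \o S) := halfpow_cauchy_cvg TS.
rewrite -(Tclosed _ _ _ (cvg_halfpow yS) TSl) -[limn _]subr0 -(linear0 T) -S0.
apply: (cvg_rnorm_le _ _ 0 TSl) => m _.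
apply: le_trans (rnorm_telescope_le TS (leq0n m)) _.
rewrite halfpow0; have := halfpow_gt0 (R:=R) m; have := mulr_ge0 K_ge0 (ltW y_gt0).
by nra.
Qed.

End ClosedGraph.

Section LinearEquations.
Context {K : pzRingType} {U V W : lmodType K}.

Lemma linear_solution [C : {linear V -> W}] [B : {linear U -> W}] :
  injective C -> range B `<=` range C ->
  exists T : {linear U -> V}, forall g, C (T g) = B g.
Proof.
move=> Cinj BC.
have pick g : exists f, C f = B g.
  have [f _ Cf] : range C (B g) by apply: BC; exists g.
  by exists f.
have [T CT] := choice pick.
have Tlin : linear T.
  by move=> a g h; apply: Cinj; rewrite linearP !CT linearP.
pose Tl : {linear U -> V} := HB.pack T (GRing.isLinear.Build _ _ _ _ T Tlin).
by exists Tl.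
Qed.

Lemma solution_graphE (C : V -> W) (B : U -> W) (T : U -> V) :
  injective C -> (forall g, C (T g) = B g) -> forall g f, C f = B g <-> f = T g.
Proof. by move=> Cinj CT g f; split => [|->//]; rewrite -CT => /Cinj. Qed.

Lemma graph_ker_range (C : {linear V -> W}) (B : {linear U -> W}) (T : U -> V) :
  (forall g f, C f = B g <-> f = T g) ->
  [set x | C x = 0] = [set 0] /\ range B `<=` range C.
Proof.
move=> CBT; split; last by move=> _ [g _ <-]; exists (T g) => //; apply/(CBT g).
have T0 : 0 = T 0 by apply/(CBT 0 0); rewrite !linear0.
apply/seteqP; split => x /=; last by move=> ->; rewrite linear0.
by rewrite -(linear0 B) => /(CBT 0 x) ->.
Qed.

End LinearEquations.

Lemma solution_graph_seq_closed {K : numFieldType} {U V W : normedModType K}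
    [C : V -> W] [B : U -> W] [T : U -> V] :
  continuous C -> continuous B -> injective C -> (forall g, C (T g) = B g) ->
  graph_seq_closed T.
Proof.
move=> Ccont Bcont Cinj CT u y h uy Tuh; apply: Cinj; rewrite CT.
have CTu : C \o (T \o u) @ \oo --> C h by apply: cvg_comp Tuh (Ccont h).
have Bu : B \o u @ \oo --> B y by apply: cvg_comp uy (Bcont y).
have CTuE : C \o (T \o u) = B \o u by apply: funext => n /=; rewrite CT.
by rewrite CTuE in CTu; exact: cvg_unique CTu Bu.
Qed.

Lemma rel_inv_sub_kernelE {R : realType} {V : normedModType R[i]}
    (A B Rop : {linear V -> V}) g f :
  rel_inv (rel_sub_op (linrel_kernel_rel A B) Rop) (g, f) <-> A f - B (Rop f) = B g.
Proof.
split => [[f0 [f' [/= Af [-> ->]]]]|CfBg]; first by rewrite linearB /= Af.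
by exists f, (g + Rop f); split;
  [rewrite /linrel_kernel_rel /= linearD -CfBg subrK | rewrite /= addrK].
Qed.

Theorem lemmaA1 (R : realType) (G : completeNormedModType R[i])
    (ip : G -> G -> R[i]) (Hip : is_inner_product ip)
    (A B Rop : {linear G -> G})
    (hA : bounded_op A) (hB : bounded_op B) (hR : bounded_op Rop)
    (hclosed : closed (linrel_kernel_rel A B)) :
  (exists T : {linear G -> G},
      bounded_op T /\
      rel_inv (rel_sub_op (linrel_kernel_rel A B) Rop) = op_graph T)
  <->
  ([set x | A x - B (Rop x) = 0] = [set 0] /\
   range B `<=` range (fun x => A x - B (Rop x))).
Proof.
pose C : {linear G -> G} := A \- (B \o Rop).
have relE g f := rel_inv_sub_kernelE A B Rop g f : _ <-> C f = B g.
split => [[T [_ graphT]] | [kerC ranB]].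
  by apply: (graph_ker_range C B T) => g f; rewrite -relE graphT.
have Cinj : injective C.
  by apply: raddf_inj => x Cx0; have : [set x | C x = 0] x := Cx0; rewrite kerC.
have [T CT] := linear_solution Cinj ranB.
have Bcont := bounded_op_continuous hB.
have Ccont : continuous C.
  move=> x; apply: continuousB; first exact: bounded_op_continuous.
  by apply: continuous_comp; [exact: bounded_op_continuous | exact: Bcont].
have [K TK] := closed_graph_bounded (solution_graph_seq_closed Ccont Bcont Cinj CT).
exists T; split; first exact: bounded_op_rnorm TK.
by apply/funext => -[g f]; apply/propext; rewrite relE; exact: solution_graphE.
Qed.
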